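(* Let $n\ge 4$ and $a$ be positive integers with $2a\le n$. Then $S_{\mathcal{Q}}(K_{a,n-a})\ge S_{\mathcal{Q}}(K_{\lfloor n/2\rfloor,\lceil n/2\rceil})$, with equality if and only if $K_{a,n-a}\cong K_{\lfloor n/2\rfloor,\lceil n/2\rceil}$ (i.e. $a=\lfloor n/2\rfloor$).
   Context: For a connected graph $G$ with vertex set $\{v_1,\dots,v_n\}$: $\mathcal{D}(G)=(d_G(v_i,v_j))$ is the distance matrix, $D_i=\sum_j d_G(v_i,v_j)$, $Tr(G)=\mathrm{diag}(D_1,\dots,D_n)$, $\mathcal{Q}(G)=Tr(G)+\mathcal{D}(G)$, and $S_{\mathcal{Q}}(G)$ is the difference between the largest and the least eigenvalue of $\mathcal{Q}(G)$. $K_{a,b}$ is the complete bipartite graph with parts of sizes $a,b$. *)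

From HB Require Import structures.
From mathcomp Require Import all_boot all_order all_algebra.
From mathcomp Require Import classical_sets reals.
Set Implicit Arguments. Unset Strict Implicit. Unset Printing Implicit Defensive.
Import Order.TTheory GRing.Theory Num.Theory.

(* A simple graph on a finite vertex type T is given by a symmetric irreflexive
   adjacency relation e. *)

Fixpoint within (T : finType) (e : rel T) (k : nat) (x y : T) : bool :=
  match k with
  | 0 => x == y
  | k'.+1 => within e k' x y || [exists z, e x z && within e k' z y]
  end.

(* Graph distance: least k such that y is reachable from x in at most k steps
   (for a connected graph on #|T| vertices this is < #|T|). *)
Definition gdist (T : finType) (e : rel T) (x y : T) : nat :=
  find (fun k => within e k x y) (iota 0 #|T|).

Local Open Scope ring_scope.

Definition distmx (R : nzRingType) (n : nat) (e : rel 'I_n) : 'M[R]_n :=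
  \matrix_(i, j) (gdist e i j)%:R.

Definition trmxG (R : nzRingType) (n : nat) (e : rel 'I_n) : 'M[R]_n :=
  \matrix_(i, j) ((i == j)%:R * \sum_(k < n) (gdist e i k)%:R).

Definition distQ (R : nzRingType) (n : nat) (e : rel 'I_n) : 'M[R]_n :=
  trmxG R e + distmx R e.

Definition spread (R : realType) (n : nat) (A : 'M[R]_n) : R :=
  sup [set l | eigenvalue A l] - inf [set l | eigenvalue A l].

Definition SQ (R : realType) (n : nat) (e : rel 'I_n) : R := spread (distQ R e).

Definition Kbip (n a : nat) : rel 'I_n := fun i j => (i < a)%N != (j < a)%N.
Arguments Kbip : clear implicits.
Arguments SQ : clear implicits.

(* In K_{a,n-a} two distinct vertices are at distance 1 or 2 according as they
   lie in different parts or in the same part, so Q = diag(n + p_i - 4) + J + S,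
   where p_i is the size of the part of i and S is the same-part indicator.  An
   eigenvector either has zero sum on both parts, and then its eigenvalue is
   n + a - 4 or n + (n - a) - 4, or its part sums form an eigenvector of the
   2x2 quotient matrix [[n + 3a - 4, n - a], [a, n + 3(n - a) - 4]].  For 2a <= n
   every eigenvalue thus lies between n + a - 4 and the largest quotient
   eigenvalue, and n + a - 4 is attained as soon as a >= 2, which gives
   S_Q(K_{a,n-a}) = (3n - 2a + sqrt(9n^2 - 32a(n-a))) / 2, decreasing in a on
   [2, n/2].  For the star (a = 1) the value n - 3 is not an eigenvalue, but the
   spread is at least the gap sqrt(9n^2 - 32(n-1)) between the two quotient
   eigenvalues, which already exceeds the balanced value. *)

From mathcomp Require Import all_boot all_order all_algebra.
From mathcomp Require Import classical_sets reals.
From mathcomp Require Import zify ring lra.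
Import Order.TTheory GRing.Theory Num.Theory.

Set Implicit Arguments.
Unset Strict Implicit.
Unset Printing Implicit Defensive.

Lemma gdist_eq (T : finType) (e : rel T) (x y : T) (k : nat) :
  (k < #|T|)%N -> within e k x y ->
  (forall i, (i < k)%N -> ~~ within e i x y) -> gdist e x y = k.
Proof.
move=> k_lt w_k w_lt_k; rewrite /gdist.
set P := fun i => within e i x y.
have has_w : has P (iota 0 #|T|) by apply/hasP; exists k; rewrite ?mem_iota.
have find_lt : (find P (iota 0 #|T|) < #|T|)%N.
  by rewrite -[X in (_ < X)%N](size_iota 0) -has_find.
apply/eqP; rewrite eqn_leq; apply/andP; split; rewrite leqNgt; apply/negP => lt.
- by have := before_find 0 lt; rewrite nth_iota // add0n /P w_k.
- by have := nth_find 0 has_w; rewrite nth_iota // add0n /P (negbTE (w_lt_k _ lt)).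
Qed.

Lemma within1 (T : finType) (e : rel T) (x y : T) :
  within e 1 x y = (x == y) || e x y.
Proof.
congr (_ || _); apply/existsP/idP => [[z /andP[exz /eqP <-]] // | exy].
by exists y; rewrite exy eqxx.
Qed.

Lemma within2 (T : finType) (e : rel T) (x y z : T) :
  e x z -> e z y -> within e 2 x y.
Proof.
move=> exz ezy; apply/orP; right; apply/existsP; exists z; rewrite exz /=.
by apply/orP; right; apply/existsP; exists y; rewrite ezy eqxx.
Qed.

Lemma gdist_Kbip (n a : nat) (i j : 'I_n) : (0 < a < n)%N ->
  gdist (Kbip n a) i j =
    if i == j then 0%N else if (i < a)%N == (j < a)%N then 2%N else 1%N.
Proof.
case/andP=> a_gt0 a_lt_n; have := ltn_ord i; have := ltn_ord j.
case: eqVneq => [<- _ _|/eqP ij j_lt i_lt].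
  by apply: gdist_eq => [||[]//]; [rewrite card_ord; lia | exact: eqxx].
have ij_nat : (i : nat) <> j by move=> /val_inj.
case: ifP => [/eqP side | /negbT side]; apply: gdist_eq; rewrite ?card_ord.
- lia.
- have z_lt : ((if (i < a)%N then a else 0) < n)%N by case: ifP => //; lia.
  apply: (@within2 _ _ _ _ (Ordinal z_lt)); rewrite /Kbip /= side;
    by case: (ltnP j a); rewrite ?ltnn ?a_gt0.
- move=> [_|[_|//]]; first exact/eqP.
  by rewrite within1 /Kbip side eqxx orbF; apply/eqP.
- lia.
- by rewrite within1 /Kbip side orbT.
- by case=> // _; apply/eqP.
Qed.

Local Open Scope ring_scope.

(* Diagonal of the quotient matrix [[quot_x, n - a], [a, quot_y]] of Q(K_{a,n-a})
   with respect to its two parts. *)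
Local Notation quot_x n a := (n%:R + 3 * a%:R - 4).
Local Notation quot_y n a := (n%:R + 3 * (n - a)%:R - 4).

Section KbipEntries.
Variables (R : comNzRingType) (n a : nat).
Hypotheses (a_gt0 : (0 < a)%N) (a_lt_n : (a < n)%N).

Local Notation same i j := (((i : 'I_n) < a)%N == ((j : 'I_n) < a)%N).
Local Notation part_size i := (if ((i : 'I_n) < a)%N then a%:R else (n - a)%:R : R).

Lemma sum_same_side (F : 'I_n -> R) j :
  \sum_(i < n) F i * (same i j)%:R =
    if (j < a)%N then \sum_(i < n | (i < a)%N) F i else \sum_(i < n | ~~ (i < a)%N) F i.
Proof.
rewrite (bigID (fun i : 'I_n => (i < a)%N)) /=; case: ifP => ja.
- rewrite [X in _ + X]big1 ?addr0 => [|i /negbTE ->]; last by rewrite mulr0.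
  by apply: eq_bigr => i ->; rewrite mulr1.
- rewrite big1 ?add0r => [|i ->]; last by rewrite mulr0.
  by apply: eq_bigr => i /negbTE ->; rewrite mulr1.
Qed.

Lemma sum_not_side (F : 'I_n -> R) :
  \sum_(i < n | ~~ (i < a)%N) F i = \sum_(i < n) F i - \sum_(i < n | (i < a)%N) F i.
Proof. by rewrite [in RHS](bigID (fun i : 'I_n => (i < a)%N)) /= addrAC subrr add0r. Qed.

Lemma sum_side_cst (c : R) : \sum_(i < n | (i < a)%N) c = a%:R * c.
Proof. by rewrite (big_ord_narrow (ltnW a_lt_n)) sumr_const card_ord mulr_natl. Qed.

Lemma sum_not_side_cst (c : R) : \sum_(i < n | ~~ (i < a)%N) c = (n - a)%:R * c.
Proof.
by rewrite sum_not_side sum_side_cst sumr_const card_ord natrB ?mulrBl ?mulr_natl // ltnW.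
Qed.

Lemma card_side j : \sum_(k < n) (same j k)%:R = part_size j.
Proof.
under eq_bigr => k _ do rewrite eq_sym -[_%:R]mul1r.
by rewrite sum_same_side; case: ifP => _; rewrite (sum_side_cst, sum_not_side_cst) mulr1.
Qed.

Lemma sum_mul_eq (F : 'I_n -> R) j : \sum_(i < n) F i * (i == j)%:R = F j.
Proof.
by rewrite (bigD1 j) //= eqxx mulr1 big1 ?addr0 // => i /negbTE ->; rewrite mulr0.
Qed.

Lemma natr_gdist_Kbip i j :
  (gdist (Kbip n a) i j)%:R = 1 + (same i j)%:R - 2 * (i == j)%:R :> R.
Proof.
rewrite gdist_Kbip ?a_gt0 //; case: eqVneq => [->|_]; rewrite ?eqxx /=; first ring.
by case: (_ < a)%N; case: (_ < a)%N => /=; ring.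
Qed.

Lemma distQ_Kbip i j :
  distQ R (Kbip n a) i j = (n%:R + part_size i - 4) * (i == j)%:R + 1 + (same i j)%:R.
Proof.
have transmission : \sum_(k < n) (gdist (Kbip n a) i k)%:R = n%:R + part_size i - 2 :> R.
  under eq_bigr => k _ do rewrite natr_gdist_Kbip.
  rewrite sumrB big_split /= sumr_const card_ord card_side.
  by under eq_bigr => k _ do rewrite eq_sym; rewrite (sum_mul_eq (fun=> 2)).
rewrite !mxE transmission natr_gdist_Kbip.
by case: eqVneq => [->|_]; rewrite ?eqxx /=; ring.
Qed.

Lemma row_mul_distQ_Kbip (v : 'rV[R]_n) j :
  (v *m distQ R (Kbip n a)) 0 j =
    (n%:R + part_size j - 4) * v 0 j
    + \sum_(i < n) v 0 i
    + (if (j < a)%N then \sum_(i < n | (i < a)%N) v 0 i else \sum_(i < n | ~~ (i < a)%N) v 0 i).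
Proof.
rewrite mxE -sum_same_side.
under eq_bigr => i _ do rewrite distQ_Kbip !mulrDr mulr1 mulrA.
by rewrite !big_split /= sum_mul_eq mulrC.
Qed.

End KbipEntries.

Section KbipSpectrum.
Variables (R : numFieldType) (n a : nat).
Hypotheses (a_gt0 : (0 < a)%N) (a_lt_n : (a < n)%N).

Local Notation Q := (distQ R (Kbip n a)).

Lemma eigenvalue_distQ_Kbip_cases l : eigenvalue Q l ->
  [\/ l = n%:R + a%:R - 4, l = n%:R + (n - a)%:R - 4
    | (l - quot_x n a) * (l - quot_y n a) = a%:R * (n - a)%:R].
Proof.
case/eigenvalueP => v vQ v_neq0.
set SA := \sum_(i < n | (i < a)%N) v 0 i.
set SB := \sum_(i < n | ~~ (i < a)%N) v 0 i.
have eig j : l * v 0 j =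
    (n%:R + (if (j < a)%N then a%:R else (n - a)%:R) - 4) * v 0 j + (SA + SB)
    + (if (j < a)%N then SA else SB).
  have -> : SA + SB = \sum_(i < n) v 0 i by rewrite [RHS](bigID (fun i : 'I_n => (i < a)%N)).
  by rewrite -row_mul_distQ_Kbip // vQ mxE.
(* Summing the eigen-equation over each part: (SA, SB) solves the quotient system. *)
have quotA : (l - quot_x n a) * SA = a%:R * SB.
  have : l * SA = (n%:R + a%:R - 4) * SA + a%:R * (SA + SB) + a%:R * SA.
    rewrite mulr_sumr (eq_bigr _ (fun j ja => eig j)).
    under eq_bigr => j ja do rewrite ja.
    by rewrite !big_split /= -mulr_sumr !sum_side_cst // -/SA; ring.
  by move=> eq_sum; rewrite mulrBl eq_sum; ring.
have quotB : (l - quot_y n a) * SB = (n - a)%:R * SA.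
  have : l * SB = (n%:R + (n - a)%:R - 4) * SB + (n - a)%:R * (SA + SB) + (n - a)%:R * SB.
    rewrite mulr_sumr (eq_bigr _ (fun j ja => eig j)).
    under eq_bigr => j ja do rewrite (negbTE ja).
    by rewrite !big_split /= -mulr_sumr !sum_not_side_cst // -/SB; ring.
  by move=> eq_sum; rewrite mulrBl eq_sum; ring.
have quad_of c : c != 0 ->
    ((l - quot_x n a) * (l - quot_y n a) - a%:R * (n - a)%:R) * c = 0 ->
    (l - quot_x n a) * (l - quot_y n a) = a%:R * (n - a)%:R.
  by move=> c_neq0 /eqP; rewrite mulf_eq0 (negbTE c_neq0) orbF subr_eq0 => /eqP.
have [SA0|SA_neq0] := eqVneq SA 0; last first.
  constructor 3; apply: (quad_of SA SA_neq0).
  rewrite (_ : _ * SA = (l - quot_y n a) * ((l - quot_x n a) * SA) - a%:R * (n - a)%:R * SA).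
    by rewrite quotA mulrCA quotB; ring.
  by ring.
have [SB0|SB_neq0] := eqVneq SB 0; last first.
  constructor 3; apply: (quad_of SB SB_neq0).
  rewrite (_ : _ * SB = (l - quot_x n a) * ((l - quot_y n a) * SB) - a%:R * (n - a)%:R * SB).
    by rewrite quotB mulrCA quotA; ring.
  by ring.
have /existsP[j vj] : [exists j, v 0 j != 0].
  apply: contraNT v_neq0 => /existsPn v0; apply/eqP/rowP => j.
  by rewrite mxE; apply/eqP/negbNE.
have := eig j; rewrite SA0 SB0 if_same !addr0 => /eqP.
rewrite -subr_eq0 -mulrBl mulf_eq0 (negbTE vj) orbF subr_eq0 => /eqP ->.
by case: (j < a)%N; [apply: Or31 | apply: Or32].
Qed.

Lemma eigenvalue_distQ_Kbip_part : (1 < a)%N -> eigenvalue Q (n%:R + a%:R - 4).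
Proof.
move=> a_gt1; have n_gt1 := ltn_trans a_gt1 a_lt_n.
pose i0 : 'I_n := Ordinal (ltnW n_gt1); pose i1 : 'I_n := Ordinal n_gt1.
have [i0_lt i1_lt] : (i0 < a)%N /\ (i1 < a)%N by split=> //; apply: ltnW.
apply/eigenvalueP; exists (delta_mx 0 i0 - delta_mx 0 i1).
  apply/rowP => j; rewrite mulmxBl -!rowE [distQ _ _]lock !mxE -lock.
  by rewrite !distQ_Kbip // i0_lt i1_lt /= ![_ == j]eq_sym; ring.
by apply/eqP => /rowP /(_ i0); rewrite !mxE eqxx /= subr0 => /eqP; rewrite oner_eq0.
Qed.

Lemma eigenvalue_distQ_Kbip_quot l :
  (l - quot_x n a) * (l - quot_y n a) = a%:R * (n - a)%:R -> eigenvalue Q l.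
Proof.
move=> quad.
pose v : 'rV[R]_n := \row_i (if (i < a)%N then (n - a)%:R else l - quot_x n a).
have SA : \sum_(i < n | (i < a)%N) v 0 i = a%:R * (n - a)%:R.
  by under eq_bigr => i ia do rewrite mxE ia; rewrite sum_side_cst.
have SB : \sum_(i < n | ~~ (i < a)%N) v 0 i = (n - a)%:R * (l - quot_x n a).
  by under eq_bigr => i ia do rewrite mxE (negbTE ia); rewrite sum_not_side_cst.
apply/eigenvalueP; exists v.
  apply/rowP => j; rewrite row_mul_distQ_Kbip // (bigID (fun i : 'I_n => (i < a)%N)) /=.
  rewrite SA SB !mxE; case: (j < a)%N; first by ring.
  by apply/eqP; rewrite -subr_eq0 -quad; apply/eqP; ring.
apply/eqP => /rowP /(_ (Ordinal (ltn_trans a_gt0 a_lt_n))).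
by rewrite !mxE /= a_gt0 => /eqP; rewrite pnatr_eq0 subn_eq0 leqNgt a_lt_n.
Qed.

End KbipSpectrum.

(* Eigenvalues of a 2x2 matrix with diagonal x, y and off-diagonal product p. *)
Section QuadraticRoots.
Variables (R : rcfType) (x y p : R).
Hypothesis p_ge0 : 0 <= p.

Definition eig2_gap : R := Num.sqrt ((x - y) ^+ 2 + 4 * p).
Definition eig2_max : R := (x + y + eig2_gap) / 2.
Definition eig2_min : R := (x + y - eig2_gap) / 2.

Lemma eig2_gap_ge0 : 0 <= eig2_gap.
Proof. exact: sqrtr_ge0. Qed.

Lemma eig2_factor l :
  (l - eig2_max) * (l - eig2_min) = (l - x) * (l - y) - p.
Proof.
have disc : eig2_gap ^+ 2 = (x - y) ^+ 2 + 4 * p.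
  by rewrite sqr_sqrtr // addr_ge0 ?sqr_ge0 ?mulr_ge0.
rewrite [LHS](_ : _ = (l - x) * (l - y) - p + ((x - y) ^+ 2 + 4 * p - eig2_gap ^+ 2) / 4).
  by rewrite disc subrr mul0r addr0.
by rewrite /eig2_max /eig2_min; field.
Qed.

Lemma eig2_maxP : (eig2_max - x) * (eig2_max - y) = p.
Proof. by apply/eqP; rewrite -subr_eq0 -eig2_factor subrr mul0r. Qed.

Lemma eig2_minP : (eig2_min - x) * (eig2_min - y) = p.
Proof. by apply/eqP; rewrite -subr_eq0 -eig2_factor subrr mulr0. Qed.

Lemma eig2_rootP l : (l - x) * (l - y) = p -> l = eig2_max \/ l = eig2_min.
Proof.
move=> root; have /eqP : (l - eig2_max) * (l - eig2_min) = 0 by rewrite eig2_factor root subrr.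
by rewrite mulf_eq0 !subr_eq0 => /orP[] /eqP; [left | right].
Qed.

End QuadraticRoots.

Lemma sqrtr_le_sqr (R : rcfType) (x y : R) : 0 <= y -> (Num.sqrt x <= y) = (x <= y ^+ 2).
Proof. by move=> y_ge0; rewrite -{1}(ger0_norm y_ge0) -sqrtr_sqr ler_sqrt ?sqr_ge0. Qed.

Lemma sqr_lt_sqrtr (R : rcfType) (x y : R) : 0 <= y -> (y < Num.sqrt x) = (y ^+ 2 < x).
Proof. by move=> y_ge0; rewrite ltNge sqrtr_le_sqr // -ltNge. Qed.

Lemma sup_max (R : realType) (E : set R) (x : R) : E x -> ubound E x -> sup E = x.
Proof.
move=> Ex ubx; apply/eqP; rewrite eq_le; apply/andP; split.
  by apply: ge_sup => //; exists x.
exact: (ub_le_sup (ex_intro _ x ubx)).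
Qed.

Lemma inf_min (R : realType) (E : set R) (x : R) : E x -> lbound E x -> inf E = x.
Proof.
move=> Ex lbx; apply/eqP; rewrite eq_le; apply/andP; split.
  exact: (ge_inf (ex_intro _ x lbx)).
by apply: lb_le_inf => //; exists x.
Qed.

Definition Kbip_gap (R : rcfType) (n a : nat) : R :=
  Num.sqrt (9 * n%:R ^+ 2 - 32 * a%:R * (n - a)%:R).

Section KbipSpread.
Variables (n a : nat).
Hypotheses (a_gt0 : (0 < a)%N) (a_le_n2 : (2 * a <= n)%N).

Local Notation quot_max := (eig2_max (quot_x n a) (quot_y n a) (a%:R * (n - a)%:R)).
Local Notation quot_min := (eig2_min (quot_x n a) (quot_y n a) (a%:R * (n - a)%:R)).

Let a_lt_n : (a < n)%N. Proof. lia. Qed.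

Lemma eig2_gap_Kbip (R : rcfType) :
  eig2_gap (quot_x n a) (quot_y n a) (a%:R * (n - a)%:R) = Kbip_gap R n a.
Proof. by rewrite /eig2_gap /Kbip_gap natrB 1?ltnW //; congr Num.sqrt; ring. Qed.

Lemma eigenvalue_distQ_Kbip_bounds (R : rcfType) l :
  eigenvalue (distQ R (Kbip n a)) l -> n%:R + a%:R - 4 <= l <= quot_max.
Proof.
set g := eig2_gap (quot_x n a) (quot_y n a) (a%:R * (n - a)%:R : R).
have g_ge0 : 0 <= g by apply: eig2_gap_ge0.
have [a_ge1 a_le_b] : 1 <= a%:R :> R /\ a%:R <= (n - a)%:R :> R.
  by split; rewrite ?ler1n ?ler_nat; lia.
have g_le : g <= a%:R + 3 * (n - a)%:R.
  rewrite /g /eig2_gap sqrtr_le_sqr; last lra.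
  rewrite natrB ?(ltnW a_lt_n) // in a_le_b *; nra.
have ab_ge0 : 0 <= a%:R * (n - a)%:R :> R by rewrite mulr_ge0.
case/eigenvalue_distQ_Kbip_cases => // [-> | -> | /(eig2_rootP ab_ge0) [] ->].
all: rewrite /eig2_max /eig2_min -/g natrB ?(ltnW a_lt_n) // in a_le_b g_le *; lra.
Qed.

Section Spectrum.
Variable R : realType.
Local Open Scope classical_set_scope.
Local Notation spectrum := [set l : R | eigenvalue (distQ R (Kbip n a)) l].

Let ab_ge0 : 0 <= a%:R * (n - a)%:R :> R. Proof. by rewrite mulr_ge0. Qed.

Lemma sup_spectrum_Kbip : sup spectrum = quot_max.
Proof.
apply: sup_max; first exact/eigenvalue_distQ_Kbip_quot/eig2_maxP.
by move=> l /eigenvalue_distQ_Kbip_bounds /andP[].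
Qed.

Lemma has_lbound_spectrum_Kbip : has_lbound spectrum.
Proof. by exists (n%:R + a%:R - 4) => l /eigenvalue_distQ_Kbip_bounds /andP[]. Qed.

Lemma inf_spectrum_Kbip : (1 < a)%N -> inf spectrum = n%:R + a%:R - 4.
Proof.
move=> a_gt1; apply: inf_min; first exact: eigenvalue_distQ_Kbip_part.
by move=> l /eigenvalue_distQ_Kbip_bounds /andP[].
Qed.

Lemma inf_spectrum_Kbip_le : inf spectrum <= quot_min.
Proof.
apply: (ge_inf has_lbound_spectrum_Kbip).
exact/eigenvalue_distQ_Kbip_quot/eig2_minP.
Qed.

End Spectrum.

Lemma SQ_Kbip (R : realType) : (1 < a)%N ->
  SQ R n (Kbip n a) = (3 * n%:R - 2 * a%:R + Kbip_gap R n a) / 2.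
Proof.
move=> a_gt1; rewrite /SQ /spread sup_spectrum_Kbip inf_spectrum_Kbip //.
by rewrite /eig2_max eig2_gap_Kbip natrB ?(ltnW a_lt_n) //; lra.
Qed.

Lemma Kbip_gap_le_SQ (R : realType) : Kbip_gap R n a <= SQ R n (Kbip n a).
Proof.
rewrite /SQ /spread sup_spectrum_Kbip -eig2_gap_Kbip.
have := inf_spectrum_Kbip_le R; rewrite /eig2_max /eig2_min; lra.
Qed.

End KbipSpread.

Section KbipGap.
Variables (R : rcfType) (n : nat).

Lemma Kbip_gap_antitone a c : (a <= c)%N -> (a + c <= n)%N ->
  Kbip_gap R n c <= Kbip_gap R n a.
Proof.
move=> a_le_c ac_le_n; have [A_le_C AC_le_N] : a%:R <= c%:R :> R /\ a%:R + c%:R <= n%:R :> R.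
  by rewrite -natrD !ler_nat.
have key : 0 <= (c%:R - a%:R) * (n%:R - a%:R - c%:R) :> R by apply: mulr_ge0; lra.
have := sqr_ge0 (n%:R - 2 * a%:R : R).
rewrite /Kbip_gap !natrB ?(leq_trans _ ac_le_n) ?leq_addl ?leq_addr //.
by move=> sq; rewrite ler_sqrt; nra.
Qed.

Lemma Kbip_spread_lt_star_gap m : (1 < m)%N -> (2 * m <= n)%N ->
  (3 * n%:R - 2 * m%:R + Kbip_gap R n m) / 2 < Kbip_gap R n 1.
Proof.
move=> m_gt1 m_le_n2; have [M_ge2 M2_le_N] : 2 <= m%:R :> R /\ 2 * m%:R <= n%:R :> R.
  by rewrite -natrM !ler_nat.
have [m_le_n n_ge1] : (m <= n)%N /\ (1 <= n)%N by split; lia.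
have gap_m : Kbip_gap R n m <= 3 * n%:R - 8.
  rewrite /Kbip_gap natrB // sqrtr_le_sqr; last lra.
  have : 0 <= (m%:R - 2) * (n%:R - m%:R - 2) :> R by apply: mulr_ge0; lra.
  nra.
have gap_1 : 3 * n%:R - 6 < Kbip_gap R n 1.
  rewrite /Kbip_gap natrB // sqr_lt_sqrtr; [nra | lra].
lra.
Qed.

End KbipGap.

Theorem lemma4p3 (R : realType) (n a : nat) :
  (4 <= n)%N -> (0 < a)%N -> (2 * a <= n)%N ->
  SQ R n (Kbip n (n./2)) <= SQ R n (Kbip n a) /\
  (SQ R n (Kbip n a) = SQ R n (Kbip n (n./2)) <-> a = n./2).
Proof.
move=> n_ge4 a_gt0 a_le_n2; set m := n./2.
have [m_gt1 m_le_n2 a_le_m] : [/\ 1 < m, 2 * m <= n & a <= m]%N.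
  by rewrite /m -divn2; split; lia.
have m_gt0 := ltnW m_gt1.
rewrite (SQ_Kbip m_gt0 m_le_n2 R m_gt1).
have [a1 | a_gt1] : a = 1%N \/ (1 < a)%N by lia.
  subst a; have := Kbip_gap_le_SQ a_gt0 a_le_n2 R.
  have := Kbip_spread_lt_star_gap R m_gt1 m_le_n2.
  by split=> [|]; [lra | split=> [?|m1]; [exfalso; lra | lia]].
rewrite (SQ_Kbip a_gt0 a_le_n2 R a_gt1).
have am_le_n : (a + m <= n)%N by lia.
have := Kbip_gap_antitone R a_le_m am_le_n.
have : a%:R <= m%:R :> R by rewrite ler_nat.
split=> [|]; first lra.
split=> [eq_SQ | ->] //; apply/eqP; rewrite eqn_leq a_le_m -(ler_nat R); lra.
Qed.
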